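(* As $n\to\infty$, $$\sup_{1+\frac{(\log n)^2}{n}<w<2}\left|\frac{2\sqrt{w}\,(w-1)}{n}F_n(w)-1\right|\to0,$$ i.e. $F_n(w)=\frac{n}{2\sqrt w(w-1)}(1+o(1))$ uniformly for $1+\frac{(\log n)^2}{n}<w<2$.
   Context: For $w>0$ and integer $n\ge1$ let $a_n(w)=\sum_{j=0}^n w^j$, $b_n(w)=\sum_{j=1}^n jw^j$, $c_n(w)=\sum_{j=0}^n j^2w^j$, and $$F_n(w)=\frac{1}{2\sqrt{w}}\sqrt{\frac{c_n(w)}{a_n(w)}}\sqrt{\frac{a_n(w)c_n(w)-b_n(w)^2}{w\,a_n(w)^2}}.$$ $\log$ is the natural logarithm. *)

From Stdlib Require Import Reals Lra.
Open Scope R_scope.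

Definition a_n (n : nat) (w : R) : R := sum_f_R0 (fun j => w ^ j) n.
(* b_n(w) = sum_{j=1}^n j w^j  (the j = 0 term is 0) *)
Definition b_n (n : nat) (w : R) : R := sum_f_R0 (fun j => INR j * w ^ j) n.
Definition c_n (n : nat) (w : R) : R := sum_f_R0 (fun j => INR j ^ 2 * w ^ j) n.

Definition F_n (n : nat) (w : R) : R :=
  / (2 * sqrt w) * sqrt (c_n n w / a_n n w)
  * sqrt ((a_n n w * c_n n w - b_n n w ^ 2) / (w * a_n n w ^ 2)).

From Stdlib Require Import Reals Lra Psatz.
Open Scope R_scope.

(* Write d = w - 1, W = w^(n+1) and N = n.  Summing the geometric series and
   its first two derivatives gives closed forms for a_n, b_n, c_n in terms of
   N, d, W.  Substituting them, the square of the rescaled quantity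
   2 sqrt w (w-1)/n * F_n(w) factors as x * y / z^3 with
     x = 1 - 2/(N d) + O(1/(N d)^2),   y = 1 + O(N^2/W),   z = 1 - 1/W.
   In the regime w > 1 + (ln n)^2/n one has N d >= (ln n)^2 -> oo and
   W >= exp(N d/2) >= N^3, so x, y, z all tend to 1 uniformly, and hence so
   does the square root. *)

Lemma a_n_closed n w : (w - 1) * a_n n w = w ^ S n - 1.
Proof.
  induction n as [|n IH]; unfold a_n in *.
  - simpl; ring.
  - rewrite tech5, Rmult_plus_distr_l, IH; cbn [pow]; ring.
Qed.

Lemma b_n_closed n w :
  (w - 1) ^ 2 * b_n n w = w ^ S n * (INR n * (w - 1) - 1) + w.
Proof.
  induction n as [|n IH]; unfold b_n in *.
  - simpl; ring.
  - rewrite tech5, Rmult_plus_distr_l, IH, S_INR; cbn [pow]; ring.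
Qed.

Lemma c_n_closed n w :
  (w - 1) ^ 3 * c_n n w =
  w ^ S n * (INR n ^ 2 * (w - 1) ^ 2 - (2 * INR n - 1) * (w - 1) + 2)
  - w * (1 + w).
Proof.
  induction n as [|n IH]; unfold c_n in *.
  - simpl; ring.
  - rewrite tech5, Rmult_plus_distr_l, IH, S_INR; cbn [pow]; ring.
Qed.

Lemma sqrt_dist_one Q : 0 <= Q -> Rabs (sqrt Q - 1) <= Rabs (Q - 1).
Proof.
  intro HQ.
  pose proof (sqrt_pos Q) as Hs; pose proof (sqrt_sqrt Q HQ) as Hss.
  set (s := sqrt Q) in *; rewrite <- Hss.
  unfold Rabs; destruct (Rcase_abs (s - 1)); destruct (Rcase_abs (s * s - 1)); nra.
Qed.

Lemma ratio_close x y z eta :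
  0 <= eta <= / 10 -> 1 - eta <= x <= 1 + eta -> 1 - eta <= y <= 1 + eta ->
  1 - eta <= z <= 1 -> Rabs (x * y / z ^ 3 - 1) <= 10 * eta.
Proof.
  intros He Hx Hy Hz.
  assert (Hz3 : 0 < z ^ 3) by (apply pow_lt; lra).
  assert (Hxy_lo : (1 - eta) ^ 2 <= x * y) by nra.
  assert (Hxy_hi : x * y <= (1 + eta) ^ 2) by nra.
  assert (Hz3_hi : z ^ 3 <= 1) by (pose proof (pow_incr z 1 3); simpl in *; nra).
  assert (Hz3_lo : (1 - eta) ^ 3 <= z ^ 3) by (apply pow_incr; lra).
  assert (Hq_lo : x * y <= x * y / z ^ 3).
  { unfold Rdiv; rewrite <- (Rmult_1_r (x * y)) at 1.
    apply Rmult_le_compat_l; [nra|].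
    rewrite <- Rinv_1; apply Rinv_le_contravar; lra. }
  assert (Hq_hi : x * y / z ^ 3 <= 1 + 10 * eta).
  { apply Rmult_le_reg_r with (z ^ 3); [exact Hz3|].
    unfold Rdiv; rewrite Rmult_assoc, Rinv_l, Rmult_1_r by lra.
    apply Rle_trans with ((1 + 10 * eta) * (1 - eta) ^ 3); [nra|].
    apply Rmult_le_compat_l; lra. }
  apply Rabs_le; split; nra.
Qed.

Lemma rescaled_sqrt_product w d N P R :
  0 < w -> 0 <= d -> 0 < N -> 0 <= P ->
  2 * sqrt w * d / N * (/ (2 * sqrt w) * sqrt P * sqrt R)
  = sqrt ((d / N) ^ 2 * P * R).
Proof.
  intros Hw Hd HN HP.
  assert (Hs : 0 < sqrt w) by (apply sqrt_lt_R0; exact Hw).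
  rewrite !sqrt_mult_alt.
  - rewrite sqrt_pow2 by (apply Rle_mult_inv_pos; lra). field; lra.
  - apply pow2_ge_0.
  - apply Rmult_le_pos; [apply pow2_ge_0 | exact HP].
Qed.

Section Normalized.

(* N plays the role of n, d of w - 1 and W of w^(n+1). *)
Variables N d W : R.
Hypotheses (HN : 0 < N) (Hd : 0 < d) (HW : 1 < W).

(* The closed forms of a_n, b_n, c_n. *)
Definition momA : R := (W - 1) / d.
Definition momB : R := (W * (N * d - 1) + (1 + d)) / d ^ 2.
Definition momC : R :=
  (W * (N ^ 2 * d ^ 2 - (2 * N - 1) * d + 2) - (1 + d) * (2 + d)) / d ^ 3.

(* The three factors of the squared rescaled F; each tends to 1. *)
Definition ratioX : R :=
  (W * (N ^ 2 * d ^ 2 - (2 * N - 1) * d + 2) - (1 + d) * (2 + d))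
  / (W * N ^ 2 * d ^ 2).
Definition ratioY : R :=
  ((1 + d) * W ^ 2 - W * ((N + 1) ^ 2 * d ^ 2 + 2 * d + 2) + (1 + d))
  / ((1 + d) * W ^ 2).
Definition ratioZ : R := 1 - / W.

Lemma momC_div_momA : momC / momA = ratioX * (W * N ^ 2 / (W - 1)).
Proof. unfold momA, momC, ratioX; field; repeat split; lra. Qed.

Lemma rescaled_square_factor :
  (d / N) ^ 2 * (momC / momA) * ((momA * momC - momB ^ 2) / ((1 + d) * momA ^ 2))
  = ratioX * ratioY / ratioZ ^ 3.
Proof. unfold momA, momB, momC, ratioX, ratioY, ratioZ; field; repeat split; lra. Qed.

Lemma ratioX_expansion :
  ratioX - 1 = - / (N * d) * (2 - / N) + 2 * (/ (N * d)) ^ 2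
               - (1 + d) * (2 + d) / W * (/ (N * d)) ^ 2.
Proof. unfold ratioX; field; repeat split; lra. Qed.

Lemma ratioY_expansion :
  ratioY - 1 = - / W * (((N + 1) ^ 2 * d ^ 2 + 2 * d + 2) / (1 + d)) + (/ W) ^ 2.
Proof. unfold ratioY; field; repeat split; lra. Qed.

Variable eta : R.
Hypotheses (Hd1 : d < 1) (Heta : 0 < eta <= / 10)
  (Ht : / (N * d) <= eta / 3) (HNinv : / N <= eta / 10) (HW3 : N ^ 3 <= W).

Lemma ratioX_close : 1 - eta <= ratioX <= 1 + eta.
Proof.
  assert (Htpos : 0 < / (N * d)) by (apply Rinv_0_lt_compat; nra).
  assert (HNpos : 0 < / N) by (apply Rinv_0_lt_compat; lra).
  assert (Hq : 0 <= (1 + d) * (2 + d) / W <= 6).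
  { split; [apply Rle_mult_inv_pos; nra|].
    apply Rmult_le_reg_r with W; [lra|].
    unfold Rdiv; rewrite Rmult_assoc, Rinv_l by lra; nra. }
  pose proof ratioX_expansion; split; nra.
Qed.

Lemma ratioY_close : 1 - eta <= ratioY <= 1 + eta.
Proof.
  assert (HN1 : 1 <= N).
  { apply Rmult_le_reg_r with (/ N); [apply Rinv_0_lt_compat; lra|].
    rewrite Rinv_r by lra; lra. }
  assert (Hu : 0 < / W <= / N ^ 3).
  { split; [apply Rinv_0_lt_compat; lra | apply Rinv_le_contravar; nra]. }
  assert (HuN : / W * N ^ 2 <= / N).
  { apply Rle_trans with (/ N ^ 3 * N ^ 2); [apply Rmult_le_compat_r; nra|].
    right; field; lra. }
  assert (Hg : 0 <= ((N + 1) ^ 2 * d ^ 2 + 2 * d + 2) / (1 + d) <= 9 * N ^ 2).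
  { split; [apply Rle_mult_inv_pos; nra|].
    apply Rmult_le_reg_r with (1 + d); [lra|].
    unfold Rdiv; rewrite Rmult_assoc, Rinv_l by lra.
    assert (d ^ 2 <= 1) by nra.
    assert ((N + 1) ^ 2 * d ^ 2 <= (N + 1) ^ 2) by nra.
    nra. }
  assert (HuN' : / W <= / N) by (apply Rinv_le_contravar; nra).
  pose proof ratioY_expansion; split; nra.
Qed.

Lemma ratioZ_close : 1 - eta <= ratioZ <= 1.
Proof.
  assert (HN1 : 1 <= N).
  { apply Rmult_le_reg_r with (/ N); [apply Rinv_0_lt_compat; lra|].
    rewrite Rinv_r by lra; lra. }
  assert (Hu : 0 < / W <= / N) by
    (split; [apply Rinv_0_lt_compat; lra | apply Rinv_le_contravar; nra]).
  unfold ratioZ; lra.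
Qed.

Lemma rescaled_closed_form_close :
  Rabs (2 * sqrt (1 + d) * d / N *
        (/ (2 * sqrt (1 + d)) * sqrt (momC / momA)
         * sqrt ((momA * momC - momB ^ 2) / ((1 + d) * momA ^ 2))) - 1)
  <= 10 * eta.
Proof.
  pose proof ratioX_close as Hx.
  assert (Hca : 0 <= momC / momA).
  { rewrite momC_div_momA; apply Rmult_le_pos; [lra|].
    apply Rle_mult_inv_pos; nra. }
  rewrite rescaled_sqrt_product by lra.
  eapply Rle_trans; [apply sqrt_dist_one|].
  - rewrite rescaled_square_factor.
    pose proof ratioY_close; pose proof ratioZ_close.
    apply Rle_mult_inv_pos; [nra | apply pow_lt; lra].
  - rewrite rescaled_square_factor.
    apply ratio_close; [lra | exact ratioX_close | exact ratioY_close | exact ratioZ_close].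
Qed.

End Normalized.

Lemma moments_closed_form n d : d <> 0 ->
  a_n n (1 + d) = momA d ((1 + d) ^ S n)
  /\ b_n n (1 + d) = momB (INR n) d ((1 + d) ^ S n)
  /\ c_n n (1 + d) = momC (INR n) d ((1 + d) ^ S n).
Proof.
  intro Hd.
  pose proof (a_n_closed n (1 + d)) as Ha.
  pose proof (b_n_closed n (1 + d)) as Hb.
  pose proof (c_n_closed n (1 + d)) as Hc.
  replace (1 + d - 1) with d in Ha, Hb, Hc by ring.
  unfold momA, momB, momC; repeat split.
  - apply Rmult_eq_reg_l with d; [rewrite Ha; field | ]; exact Hd.
  - apply Rmult_eq_reg_l with (d ^ 2); [rewrite Hb; field | apply pow_nonzero]; exact Hd.
  - apply Rmult_eq_reg_l with (d ^ 3); [rewrite Hc; field | apply pow_nonzero]; exact Hd.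
Qed.

Lemma inv_small k x eta : 0 < k -> 0 < eta -> k / eta <= x -> / x <= eta / k.
Proof.
  intros Hk Heta Hx.
  replace (eta / k) with (/ (k / eta)) by (field; lra).
  apply Rinv_le_contravar; [apply Rdiv_lt_0_compat|]; lra.
Qed.

(* ln(1 + d) >= d/2 on (0, 1), from 1 + x <= exp x applied to x = ln(1/(1+d)). *)
Lemma ln_lower_half d : 0 < d < 1 -> d / 2 <= ln (1 + d).
Proof.
  intro Hd.
  pose proof (exp_ineq1_le (ln (/ (1 + d)))) as H.
  rewrite exp_ln in H by (apply Rinv_0_lt_compat; lra).
  rewrite ln_Rinv in H by lra.
  assert (/ (1 + d) * (1 + d) = 1) by (field; lra).
  nra.
Qed.

Lemma cube_below_power n d :
  0 < d < 1 -> 6 < ln (INR n) -> ln (INR n) ^ 2 < INR n * d ->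
  INR n ^ 3 <= (1 + d) ^ S n.
Proof.
  intros Hd HL Hnd.
  set (L := ln (INR n)) in *.
  assert (HN : 0 < INR n) by nra.
  left; apply ln_lt_inv; [apply pow_lt; exact HN | apply pow_lt; lra|].
  rewrite !ln_pow by lra.
  replace (INR 3) with 3 by (simpl; ring).
  rewrite S_INR; fold L.
  pose proof (ln_lower_half d Hd) as Hln.
  assert (HnL : INR n * (d / 2) <= (INR n + 1) * ln (1 + d)) by nra.
  assert (3 * L <= L ^ 2 / 2) by nra.
  lra.
Qed.

(* For large n, every w in the range 1 + (ln n)^2/n < w < 2 satisfies the
   smallness conditions of rescaled_closed_form_close with d = w - 1, N = n,
   W = w^(n+1): it suffices that ln n exceeds 6 + 10/eta. *)
Lemma large_n_regime eta : 0 < eta ->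
  exists N0 : nat, forall n : nat, (N0 <= n)%nat ->
  forall w : R, 1 + ln (INR n) ^ 2 / INR n < w -> w < 2 ->
  1 < INR n /\ / (INR n * (w - 1)) <= eta / 3 /\ / INR n <= eta / 10
  /\ INR n ^ 3 <= w ^ S n.
Proof.
  intros Heta.
  set (M := 6 + 10 / eta).
  assert (H10 : 0 < 10 / eta) by (apply Rdiv_lt_0_compat; lra).
  assert (H3 : 3 / eta <= 10 / eta)
    by (unfold Rdiv; apply Rmult_le_compat_r; [left; apply Rinv_0_lt_compat|]; lra).
  assert (HM : 6 < M /\ 10 / eta < M) by (unfold M; lra).
  destruct (INR_unbounded (exp M)) as [N0 HN0].
  exists N0; intros n Hn w Hw1 Hw2.
  pose proof (exp_ineq1_le M) as HexpM.
  assert (Hn_big : exp M < INR n) by (pose proof (le_INR _ _ Hn); lra).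
  assert (HL : M < ln (INR n))
    by (rewrite <- (ln_exp M); apply ln_increasing; [apply exp_pos | exact Hn_big]).
  set (L := ln (INR n)) in *.
  assert (HL6 : 6 < L) by lra.
  assert (HLM : M <= L ^ 2) by nra.
  assert (Hn_pos : 0 < INR n) by lra.
  assert (Hnd : L ^ 2 < INR n * (w - 1)).
  { apply Rmult_lt_reg_r with (/ INR n); [apply Rinv_0_lt_compat; exact Hn_pos|].
    replace (INR n * (w - 1) * / INR n) with (w - 1) by (field; lra).
    unfold Rdiv in Hw1; lra. }
  assert (HL2 : 0 < L ^ 2) by (apply pow_lt; lra).
  repeat split.
  - lra.
  - apply inv_small; lra.
  - apply inv_small; lra.
  - replace w with (1 + (w - 1)) by ring.
    apply cube_below_power; [split; nra | exact HL6 | exact Hnd].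
Qed.

Theorem lemma3p7 :
  forall eps : R, 0 < eps ->
  exists N : nat, forall n : nat, (N <= n)%nat ->
  forall w : R, 1 + (ln (INR n)) ^ 2 / INR n < w -> w < 2 ->
  Rabs (2 * sqrt w * (w - 1) / INR n * F_n n w - 1) <= eps.
Proof.
  intros eps Heps.
  set (eta := Rmin eps 1 / 10).
  assert (Heta : 0 < eta <= / 10 /\ 10 * eta <= eps).
  { unfold eta; pose proof (Rmin_l eps 1); pose proof (Rmin_r eps 1).
    pose proof (Rmin_glb_lt eps 1 0 Heps ltac:(lra)); lra. }
  destruct (large_n_regime eta) as [N0 HN0]; [lra|].
  exists N0; intros n Hn w Hw1 Hw2.
  destruct (HN0 n Hn w Hw1 Hw2) as (Hn1 & Ht & HNinv & HW3).
  set (d := w - 1) in *.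
  assert (Hd : 0 < d).
  { assert (0 <= ln (INR n) ^ 2 / INR n); [|unfold d; lra].
    apply Rle_mult_inv_pos; [apply pow2_ge_0 | lra]. }
  assert (Hw : w = 1 + d) by (unfold d; ring).
  clearbody d; subst w.
  assert (HW1 : 1 < (1 + d) ^ S n) by (apply Rlt_pow_R1; [lra | lia]).
  destruct (moments_closed_form n d) as (Ea & Eb & Ec); [lra|].
  unfold F_n; rewrite Ea, Eb, Ec.
  eapply Rle_trans;
    [apply rescaled_closed_form_close with (eta := eta); first [assumption | lra] | lra].
Qed.
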